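(* For every tree $T$, the numbers $\mathrm{sn}(T,k)$ are monotone non-decreasing in $k$ (for $k\ge\chi(T)$).
   Context: For a graph $G=(V,E)$ and an integer $k\ge\chi(G)$, a proper $k$-colouring is a map $c:V\to[k]$ with $c(u)\neq c(v)$ for every edge $uv$. $\mathrm{sn}(G,k)$ is the minimum number of vertices of $G$ that have to be coloured in a partial colouring such that there exists a unique proper $k$-colouring of $G$ extending it. *)

From mathcomp Require Import all_boot.
Set Implicit Arguments. Unset Strict Implicit. Unset Printing Implicit Defensive.

Section Graphs.
Variable T : finType.
Implicit Types (e : rel T).

Definition simple_graph e := symmetric e /\ irreflexive e.

Definition connected_graph e := forall x y : T, connect e x y.

Definition acyclic e :=
  forall (x : T) (p : seq T),
    uniq (x :: p) -> path e x p -> 2 <= size p -> ~~ e (last x p) x.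

Definition is_tree e := [/\ simple_graph e, 0 < #|T|, connected_graph e & acyclic e].

Definition proper_col e k (c : {ffun T -> 'I_k}) : bool :=
  [forall x, forall y, e x y ==> (c x != c y)].

(* chromatic number: least k admitting a proper k-colouring (k <= |V| always works) *)
Definition chi e : nat :=
  \big[minn/#|T|]_(k < #|T|.+1 | [exists c : {ffun T -> 'I_k}, proper_col e c]) (k : nat).

Definition defining_set e k (S : {set T}) : bool :=
  [exists f : {ffun T -> 'I_k},
     #|[set c : {ffun T -> 'I_k} | proper_col e c && [forall x in S, c x == f x]]| == 1].

(* sn(G,k): minimum size of a defining set (default #|T|.+1 if none exists,
   which only happens when k < chi) *)
Definition sn e k : nat :=
  \big[minn/#|T|.+1]_(S : {set T} | defining_set e k S) #|S|.

End Graphs.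

From mathcomp Require Import all_boot zify.
Set Implicit Arguments. Unset Strict Implicit. Unset Printing Implicit Defensive.

(* For k >= 2, every defining set S for k+1 colours is one for k colours (for
   k <= 1 a forest has at most one proper k-colouring).  Let c be the unique
   (k+1)-colouring extending its restriction to S.  Adding the vertices of the
   forest leaf by leaf, one builds a proper k-colouring c' which on each
   neighbourhood N(u) equals phi_u \o c, for a surjection phi_u of [k+1] onto
   [k] under which c(u) is the only preimage of c'(u).  If a second proper
   k-colouring d agreed with c' on S, let U be the set where they differ.  A
   vertex u of U sees at most k-1 colours of c on its neighbours outside U:
   there d = c' misses both c'(u) and d(u), and phi_u merges only one pair.  So
   the forest U can be recoloured from lists of at least two colours so as to
   differ from c somewhere, and patching this into c yields a second
   (k+1)-colouring extending c on S. *)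

Lemma exists_other (X : finType) (A : {set X}) (x : X) :
  1 < #|A| -> exists2 y, y \in A & y != x.
Proof.
case/card_gt1P => y [z [yA zA yz]].
by case: (eqVneq y x) => [yx|]; [exists z; rewrite // -yx eq_sym | exists y].
Qed.

Lemma card_imset_surj (X Y : finType) (f : X -> Y) (B : {set X}) :
  (forall y, exists x, f x = y) -> #|Y| + #|B| <= #|f @: B| + #|X|.
Proof.
move=> f_surj.
have cover : [set: Y] \subset f @: B :|: f @: ~: B.
  apply/subsetP => y _; have [x <-] := f_surj y.
  rewrite inE; case: (boolP (x \in B)) => xB; first by rewrite imset_f.
  by rewrite orbC imset_f ?inE.
have := subset_leq_card cover; rewrite cardsT cardsU.
have := leq_imset_card f (~: B); have := cardsC B; lia.
Qed.

Lemma exists_merge_map n (x1 x2 : 'I_n.+2) (y1 y2 : 'I_n.+1) :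
  x1 != x2 -> y1 != y2 ->
  exists phi : 'I_n.+2 -> 'I_n.+1,
    [/\ forall y, exists x, phi x = y, phi x2 = y2 & forall x, (phi x == y1) = (x == x1)].
Proof.
case: (unliftP x1 x2) => [j2 -> _|<-]; last by rewrite eqxx.
case: (unliftP y1 y2) => [z2 -> _|<-]; last by rewrite eqxx.
(* Off x1 and y1, phi is [odflt z2 \o unlift j2], which merges j2 with [lift j2 z2]. *)
exists (fun x => if unlift x1 x is Some j then lift y1 (odflt z2 (unlift j2 j)) else y1).
split=> [y||x].
- case: (unliftP y1 y) => [z ->|<-]; last by exists x1; rewrite unlift_none.
  by exists (lift x1 (lift j2 z)); rewrite !liftK.
- by rewrite liftK unlift_none.
- case: (unliftP x1 x) => [j ->|<-]; last by rewrite !eqxx.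
  by rewrite eq_sym (negbTE (neq_lift _ _)) eq_sym (negbTE (neq_lift _ _)).
Qed.

Lemma bigmin_le_idx (I : Type) (r : seq I) (P : pred I) (F : I -> nat) x :
  \big[minn/x]_(i <- r | P i) F i <= x.
Proof. by elim/big_rec: _ => // i y _; apply: leq_trans (geq_minr _ _). Qed.

Lemma bigmin_le_term (I : eqType) (r : seq I) (P : pred I) (F : I -> nat) x i :
  i \in r -> P i -> \big[minn/x]_(j <- r | P j) F j <= F i.
Proof.
elim: r => // j r IH; rewrite inE big_cons => /predU1P [<- ->|ir Pi].
  exact: geq_minl.
by case: ifP => _; [apply: leq_trans (geq_minr _ _) _|]; apply: IH.
Qed.

Lemma proper_colP (T : finType) (e : rel T) k (c : {ffun T -> 'I_k}) :
  reflect (forall x y, e x y -> c x != c y) (proper_col e c).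
Proof.
apply: (iffP forallP) => [c_proper x y exy | c_proper x].
  by move/forallP/(_ y): (c_proper x); rewrite exy.
by apply/forallP => y; apply/implyP; apply: c_proper.
Qed.

Section Forests.
Variables (T : finType) (e : rel T).
Hypotheses (e_sym : symmetric e) (e_irr : irreflexive e) (e_acyclic : acyclic e).

Definition at_most_one_nbr (U : {set T}) (l : T) := #|[set x in U | e l x]| <= 1.

Lemma at_most_one_nbrP U l x y :
  at_most_one_nbr U l -> x \in U -> y \in U -> e l x -> e l y -> x = y.
Proof.
move=> /card_le1_eqP l_leaf xU yU elx ely.
by apply: l_leaf; rewrite inE ?xU ?yU.
Qed.

Lemma acyclic_uniq_cons (y z : T) (t : seq T) :
  uniq (y :: t) -> path e y t -> e z y -> ohead t != Some z -> uniq [:: z, y & t].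
Proof.
move=> yt_uniq yt_path ezy z_not_next; rewrite cons_uniq yt_uniq andbT.
apply/negP; rewrite inE => /predU1P [zy|zt]; first by rewrite zy e_irr in ezy.
have z_later : 0 < index z t.
  case: t z_not_next zt {yt_uniq yt_path} => // q r /= qz _.
  by case: (q =P z) qz => [->|//]; rewrite eqxx.
pose p := take (index z t).+1 t.
have size_p : size p = (index z t).+1 by rewrite size_takel // index_mem.
have last_p : last y p = z by rewrite -nth_last size_p nth_take ?nth_index.
have p_uniq : uniq (y :: p) := take_uniq (index z t).+2 yt_uniq.
have := e_acyclic p_uniq (take_path _ yt_path).
by rewrite size_p ltnS z_later last_p ezy => /(_ isT).
Qed.

Lemma exists_leaf (U : {set T}) :
  U != set0 -> exists2 l, l \in U & at_most_one_nbr U l.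
Proof.
case/set0Pn => u0 u0U.
case: (boolP [exists l in U, at_most_one_nbr U l]) => [/exists_inP //|].
move/exists_inPn => no_leaf.
have two_nbrs l : l \in U -> exists x y, [/\ x \in U, y \in U, e l x, e l y & x != y].
  move=> lU; have := no_leaf l lU; rewrite -ltnNge => /card_gt1P [x [y [+ + xy]]].
  by rewrite !inE => /andP [xU elx] /andP [yU ely]; exists x, y.
have long_path m : exists y t, [/\ size t = m, uniq (y :: t), {subset y :: t <= U} & path e y t].
  elim: m => [|m [y [t [size_t yt_uniq ytU yt_path]]]].
    by exists u0, [::]; split=> // x; rewrite inE => /eqP ->.
  have [x1 [x2 [x1U x2U ex1 ex2 x12]]] := two_nbrs y (ytU y (mem_head _ _)).
  have [z [zU eyz z_not_next]] : exists z, [/\ z \in U, e y z & ohead t != Some z].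
    case: (eqVneq (ohead t) (Some x1)) => [t1|]; last by exists x1.
    by exists x2; rewrite t1; split=> //; apply: contra x12 => /eqP [->].
  exists z, (y :: t); split=> //=; first by rewrite size_t.
  - by apply: acyclic_uniq_cons; rewrite // e_sym.
  - by move=> x; rewrite inE => /predU1P [->|/ytU].
  - by rewrite e_sym eyz.
have [y [t [size_t yt_uniq ytU _]]] := long_path #|U|.
have : {subset y :: t <= enum U} by move=> x /ytU; rewrite mem_enum.
by move/(uniq_leq_size yt_uniq); rewrite /= size_t -cardE ltnn.
Qed.

Lemma forest_set_ind (P : {set T} -> Prop) :
  P set0 ->
  (forall (U : {set T}) l, l \notin U -> at_most_one_nbr U l -> P U -> P (l |: U)) ->
  forall U, P U.
Proof.
move=> P0 P_add U; elim: {U}_.+1 {-2}U (ltnSn #|U|) => // m IH U.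
case: (eqVneq U set0) => [-> //|U_neq0 U_small].
have [l lU l_leaf] := exists_leaf U_neq0.
rewrite -(setD1K lU); apply: P_add; first by rewrite setD11.
  apply: leq_trans l_leaf; apply/subset_leq_card/subsetP => x.
  by rewrite !inE => /andP [/andP [_ ->]].
by apply: IH; move: U_small; rewrite (cardsD1 l U) lU.
Qed.

Lemma list_colouring_avoiding m (L : T -> {set 'I_m}) (c : T -> 'I_m) (U : {set T}) :
  U != set0 -> {in U, forall u, 1 < #|L u|} ->
  exists d : T -> 'I_m, [/\ {in U, forall u, d u \in L u},
    {in U &, forall x y, e x y -> d x != d y} & exists2 u, u \in U & d u != c u].
Proof.
elim/forest_set_ind: U => [|U l lU l_leaf IH _ L_big]; first by rewrite eqxx.
have Ll_big : 1 < #|L l| by apply: L_big; rewrite setU11.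
case: (eqVneq U set0) => [U0|U_neq0].
  have [col colL col_c] := exists_other (c l) Ll_big.
  exists (fun=> col); rewrite U0 setU0; split=> [u /set1P -> //|x y|].
    by move=> /set1P -> /set1P ->; rewrite e_irr.
  by exists l; rewrite ?set11.
have [d0 [d0L d0_proper [u uU d0u]]] := IH U_neq0 (fun u uU => L_big u (setU1r l uU)).
have [col colL col_nbr] :
    exists2 col, col \in L l & {in U, forall p, e l p -> col != d0 p}.
  case: (pickP [pred p in U | e l p]) => [p /andP [pU elp]|no_nbr].
    have [col colL col_p] := exists_other (d0 p) Ll_big.
    by exists col => // q qU elq; rewrite (at_most_one_nbrP l_leaf qU pU elq elp).
  have [col colL _] := exists_other (c l) Ll_big.
  by exists col => // q qU elq; move: (no_nbr q); rewrite /= qU elq.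
have neq_l v : v \in U -> (v == l) = false by move=> vU; apply: contraNF lU => /eqP <-.
exists (fun v => if v == l then col else d0 v); split.
- by move=> v /setU1P [->|vU]; rewrite ?eqxx ?neq_l //; apply: d0L.
- move=> x y /setU1P [->|xU] /setU1P [->|yU] exy; rewrite ?eqxx ?neq_l //.
  + by rewrite e_irr in exy.
  + exact: col_nbr.
  + by rewrite eq_sym col_nbr // e_sym.
  + exact: d0_proper.
- by exists u; rewrite ?setU1r ?neq_l.
Qed.

Section LocalQuotient.
Variables (n : nat) (c : T -> 'I_n.+3).
Hypothesis c_proper : forall x y, e x y -> c x != c y.

Definition quotient_at (W : {set T}) (c' : T -> 'I_n.+2) u (phi : 'I_n.+3 -> 'I_n.+2) :=
  [/\ forall y, exists x, phi x = y, forall x, (phi x == c' u) = (x == c u)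
    & {in W, forall w, e u w -> c' w = phi (c w)}].

Lemma exists_local_quotient (W : {set T}) :
  exists c' (Phi : T -> 'I_n.+3 -> 'I_n.+2), {in W, forall u, quotient_at W c' u (Phi u)}.
Proof.
elim/forest_set_ind: W => [|W l lW l_leaf [c0 [Phi0 Phi0_quot]]].
  by exists (fun=> ord0), (fun _ _ => ord0) => u; rewrite in_set0.
suff [col [phil [phil_surj phil_col phil_nbr]]] : exists col phil,
    [/\ forall y, exists x, phil x = y, forall x, (phil x == col) = (x == c l)
      & {in W, forall p, e l p -> phil (c p) = c0 p /\ col = Phi0 p (c l)}].
  exists (fun v => if v == l then col else c0 v), (fun v => if v == l then phil else Phi0 v).
  have neq_l v : v \in W -> (v == l) = false by move=> vW; apply: contraNF lW => /eqP <-.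
  move=> u /setU1P [->|uW]; rewrite /quotient_at ?eqxx ?neq_l //.
    split=> // w /setU1P [->|wW elw]; first by rewrite e_irr.
    by rewrite neq_l //; have [] := phil_nbr w wW elw.
  have [Phi_surj Phi_col Phi_nbr] := Phi0_quot u uW.
  split=> // w /setU1P [->|wW euw]; rewrite ?eqxx ?neq_l //; last exact: Phi_nbr.
  by rewrite e_sym => elu; have [] := phil_nbr u uW elu.
case: (pickP [pred p in W | e l p]) => [p /andP [pW elp]|no_nbr].
  have [_ Phi_col _] := Phi0_quot p pW.
  have col_p : Phi0 p (c l) != c0 p by rewrite Phi_col c_proper.
  have [phil [phil_surj phil_p phil_col]] := exists_merge_map (c_proper elp) col_p.
  exists (Phi0 p (c l)), phil; split=> // q qW elq.
  by rewrite (at_most_one_nbrP l_leaf qW pW elq elp).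
have [phil [phil_surj _ phil_col]] :=
  exists_merge_map (neq_lift (c l) ord0) (neq_lift (c0 l) ord0).
by exists (c0 l), phil; split=> // q qW elq; move: (no_nbr q); rewrite /= qW elq.
Qed.

Lemma quotient_proper c' (Phi : T -> 'I_n.+3 -> 'I_n.+2) :
  (forall u, quotient_at setT c' u (Phi u)) -> forall x y, e x y -> c' x != c' y.
Proof.
move=> quot x y exy; have [_ Phi_col Phi_nbr] := quot x.
by rewrite eq_sym (Phi_nbr y (in_setT y) exy) Phi_col eq_sym c_proper.
Qed.

Lemma card_quotient_nbrs c' u phi (A : {set T}) y :
  quotient_at setT c' u phi -> (forall w, w \in A -> e u w) ->
  y \notin c' @: A -> y != c' u -> #|c @: A| <= n.+1.
Proof.
move=> [phi_surj phi_col phi_nbr] A_nbr yA yu.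
have c'A : c' @: A = phi @: (c @: A).
  rewrite -imset_comp; apply: eq_in_imset => w wA /=.
  exact: phi_nbr (in_setT w) (A_nbr w wA).
have c'A_sub : c' @: A \subset ~: [set c' u; y].
  apply/subsetP => _ /imsetP [w wA ->]; rewrite !inE negb_or.
  rewrite (phi_nbr w (in_setT w) (A_nbr w wA)) phi_col eq_sym c_proper ?A_nbr //=.
  by apply: contra yA => /eqP <-; rewrite c'A imset_f ?imset_f.
have := card_imset_surj (c @: A) phi_surj; rewrite -c'A !card_ord.
have := subset_leq_card c'A_sub; have := cardsC [set c' u; y].
by rewrite cards2 eq_sym yu card_ord; lia.
Qed.

End LocalQuotient.

Lemma defining_setP k (S : {set T}) :
  reflect (exists2 c : {ffun T -> 'I_k}, proper_col e c &
             forall d, proper_col e d -> {in S, d =1 c} -> d = c)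
          (defining_set e k S).
Proof.
apply: (iffP existsP) => [[f /cards1P [c c_only]]|[c c_proper c_uniq]].
  have : c \in [set c0 | proper_col e c0 && [forall x in S, c0 x == f x]].
    by rewrite c_only set11.
  rewrite inE => /andP [c_proper /forall_inP cS]; exists c => // d d_proper dS.
  apply/set1P; rewrite -c_only inE d_proper; apply/forall_inP => x xS.
  by rewrite dS // cS.
exists c; apply/cards1P; exists c; apply/setP => d; rewrite !inE.
apply/andP/eqP => [[d_proper /forall_inP dS]|->]; last by split=> //; apply/forall_inP.
by apply: c_uniq => // x /dS /eqP.
Qed.

Lemma defining_set_of_succ n (S : {set T}) :
  defining_set e n.+3 S -> defining_set e n.+2 S.
Proof.
case/defining_setP => c /proper_colP c_proper c_uniq.
have [c' [Phi Phi_quot]] := exists_local_quotient c_proper setT.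
have quot u : quotient_at c setT c' u (Phi u) by apply: Phi_quot (in_setT u).
have c'_proper := quotient_proper c_proper quot.
pose cf := [ffun v => c' v].
apply/defining_setP; exists cf.
  by apply/proper_colP => x y exy; rewrite !ffunE c'_proper.
move=> d /proper_colP d_proper dS.
pose U := [set v | d v != cf v].
apply/ffunP => v; apply/eqP; apply: contraT => dv.
have U_neq0 : U != set0 by apply/set0Pn; exists v; rewrite inE.
pose L u := ~: (c @: [set w | e u w & w \notin U]).
have L_big : {in U, forall u, 1 < #|L u|}.
  move=> u uU; pose A := [set w | e u w & w \notin U].
  have A_nbr w : w \in A -> e u w by rewrite inE => /andP [].
  have du_A : d u \notin c' @: A.
    apply/imsetP => [[w]]; rewrite !inE negbK => /andP [euw /eqP dw] duw.
    by move: (d_proper u w euw); rewrite dw ffunE duw eqxx.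
  have du_c'u : d u != c' u by move: uU; rewrite inE ffunE.
  have := card_quotient_nbrs c_proper (quot u) A_nbr du_A du_c'u.
  by have := cardsC (c @: A); rewrite card_ord -/(L u); lia.
have [d0 [d0L d0_proper [u uU d0u]]] := list_colouring_avoiding c U_neq0 L_big.
pose d' := [ffun v => if v \in U then d0 v else c v].
have d'_proper : proper_col e d'.
  apply/proper_colP => x y exy; rewrite !ffunE.
  case: (boolP (x \in U)) => xU; case: (boolP (y \in U)) => yU.
  - exact: d0_proper.
  - have := d0L x xU; rewrite inE; apply: contra => /eqP ->.
    by apply: imset_f; rewrite inE exy yU.
  - have := d0L y yU; rewrite inE eq_sym; apply: contra => /eqP ->.
    by apply: imset_f; rewrite inE e_sym exy xU.
  - exact: c_proper.
have d'S : {in S, d' =1 c} by move=> x xS; rewrite ffunE inE dS // eqxx.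
have /ffunP/(_ u) := c_uniq d' d'_proper d'S.
by rewrite ffunE uU => d0c; rewrite d0c eqxx in d0u.
Qed.

End Forests.

Lemma defining_set_le1 (T : finType) (e : rel T) k (g : {ffun T -> 'I_k})
    (S : {set T}) :
  k <= 1 -> proper_col e g -> defining_set e k S.
Proof.
move=> k_le1 g_proper; apply/defining_setP; exists g => // d _ _.
apply/ffunP => x; apply/ord_inj; move: (ltn_ord (d x)) (ltn_ord (g x)); lia.
Qed.

Lemma exists_proper_col_chi (T : finType) (e : rel T) k :
  irreflexive e -> chi e <= k -> exists g : {ffun T -> 'I_k}, proper_col e g.
Proof.
move=> e_irr chi_k.
suff [g g_proper] : exists g : {ffun T -> 'I_(chi e)}, proper_col e g.
  exists [ffun x => widen_ord chi_k (g x)]; apply/proper_colP => x y exy.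
  rewrite !ffunE; apply: contra (proper_colP _ _ g_proper x y exy).
  by move=> /eqP/(congr1 val) /= gxy; apply/eqP/val_inj.
rewrite /chi; apply: (big_ind (fun j => exists g : {ffun T -> 'I_j}, proper_col e g)).
- exists [ffun x => enum_rank x]; apply/proper_colP => x y exy; rewrite !ffunE.
  by apply: contraTneq exy => /enum_rank_inj ->; rewrite e_irr.
- move=> i j [gi gi_proper] [gj gj_proper].
  by rewrite /minn; case: ifP => _; [exists gi | exists gj].
- by move=> i /existsP.
Qed.

Lemma leq_sn (T : finType) (e : rel T) k k' :
  (forall S, defining_set e k' S -> defining_set e k S) -> sn e k <= sn e k'.
Proof.
move=> def_sub; rewrite [X in _ <= X]/sn.
apply: (big_rec (fun y => sn e k <= y)) => [|S y S_def le_y]; first exact: bigmin_le_idx.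
by rewrite leq_min le_y bigmin_le_term ?mem_index_enum ?def_sub.
Qed.

Theorem corollary1 (T : finType) (e : rel T) :
  is_tree e -> forall k : nat, chi e <= k -> sn e k <= sn e k.+1.
Proof.
move=> [[e_sym e_irr] _ _ e_acyclic] k chi_k; apply: leq_sn => S.
case: (leqP k 1) => [k_le1 _ | k_gt1].
  have [g g_proper] := exists_proper_col_chi e_irr chi_k.
  exact: defining_set_le1 k_le1 g_proper.
case: k k_gt1 {chi_k} => [|[|n]] // _.
exact: defining_set_of_succ e_sym e_irr e_acyclic n S.
Qed.
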